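(* Let $G$ be a planar PCC graph and let $\sigma,\sigma',\kappa$ be faces with $|\sigma|,|\sigma'|\ge 20$ and $|\kappa|\le 6$. Let $e,e'$ be edges on the boundary of $\kappa$ such that $e$ lies on the boundary of $\sigma$ and $e'$ lies on the boundary of $\sigma'$. Then $\sigma=\sigma'$ and $e=e'$.
   Context: $G$ is a finite simple connected graph 2-cell embedded in the sphere; $|\sigma|$ denotes the length of the boundary walk of a face $\sigma$; for a vertex $v$, $F(v)$ is the multiset of faces incident to $v$ (one per corner) and $K(v)=1-\frac{\deg(v)}{2}+\sum_{\sigma\in F(v)}\frac1{|\sigma|}$. A prism (resp. antiprism) of order $N$ is the planar graph with $2N$ vertices, two $N$-faces and $N$ quadrilaterals (resp. $2N$ triangles), each vertex incident to two quadrilaterals and one $N$-face (resp. three triangles and one $N$-face). A planar PCC graph is such a $G$ with $K(v)>0$, $\deg(v)\ge3$ for all $v$, not a prism or antiprism. *)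

(* Planar maps encoded as combinatorial maps (rotation systems). *)
From HB Require Import structures.
From mathcomp Require Import all_boot all_order all_algebra.
Set Implicit Arguments. Unset Strict Implicit. Unset Printing Implicit Defensive.
Import Order.TTheory GRing.Theory Num.Theory.

(* A map on the finite set of darts T:
   - [a] : edge involution (fixed-point free), a dart d and [a d] are the two
     halves of one edge;
   - [n] : vertex rotation (a permutation); vertices = orbits of [n];
   - faces = orbits of the face permutation [fperm a n := n \o a]:
     from dart d (at vertex u, pointing to v) go to [a d] (at v) and turn. *)

Section Maps.
Variables (T : finType) (a n : T -> T).

Definition fperm : T -> T := fun d => n (a d).

Definition deg (v : T) : nat := order n v.
Definition flen (s : T) : nat := order fperm s.

Definition nvert := fcard n predT.
Definition nedge := fcard a predT.
Definition nface := fcard fperm predT.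

Definition is_map : Prop :=
  [/\ injective n, cancel a a & forall d, a d != d].

Definition map_connected : Prop :=
  forall x y, connect [rel u w | (w == a u) || (w == n u)] x y.

(* 2-cell embedding in the sphere: Euler characteristic 2 *)
Definition genus0 : Prop := (nvert + nface = nedge + 2)%N.

(* simple graph: no loops, no multiple edges *)
Definition simple_map : Prop :=
  (forall d, ~~ fconnect n d (a d)) /\
  (forall d d', fconnect n d d' -> fconnect n (a d) (a d') -> d = d').

Definition curvature (v : T) : rat :=
  (1 - (deg v)%:R / 2 + \sum_(d | fconnect n v d) ((flen d)%:R)^-1)%R.

Definition ncorners (v s : T) : nat :=
  #|[pred d | fconnect n v d & fconnect fperm s d]|.

Definition is_prism (N : nat) : Prop :=
  [/\ (3 <= N)%N, nvert = (2 * N)%N, nface = N.+2 &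
   exists f1 f2, [/\ ~~ fconnect fperm f1 f2, flen f1 = N, flen f2 = N,
     (forall d, ~~ fconnect fperm f1 d -> ~~ fconnect fperm f2 d -> flen d = 4%N) &
     (forall v, deg v = 3%N /\ (ncorners v f1 + ncorners v f2 = 1)%N)]].

Definition is_antiprism (N : nat) : Prop :=
  [/\ (3 <= N)%N, nvert = (2 * N)%N, nface = (2 * N).+2 &
   exists f1 f2, [/\ ~~ fconnect fperm f1 f2, flen f1 = N, flen f2 = N,
     (forall d, ~~ fconnect fperm f1 d -> ~~ fconnect fperm f2 d -> flen d = 3%N) &
     (forall v, deg v = 4%N /\ (ncorners v f1 + ncorners v f2 = 1)%N)]].

Definition planar_PCC : Prop :=
  [/\ is_map, map_connected, genus0 & simple_map] /\
  [/\ forall v, (0 < curvature v)%R,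
      forall v, (3 <= deg v)%N &
      forall N, ~ is_prism N /\ ~ is_antiprism N].

Definition edge_on_face (d s : T) : bool :=
  fconnect fperm s d || fconnect fperm s (a d).

End Maps.

From Pilot Require Import Defs.
From mathcomp Require Import all_boot all_order all_algebra.
From mathcomp Require Import lra zify.
Set Implicit Arguments. Unset Strict Implicit. Unset Printing Implicit Defensive.
Import GRing.Theory Num.Theory.

(** Around a vertex of degree d the reciprocal lengths of the incident faces sum
    to more than d/2 - 1. A corner in a face of length >= 20 contributes at most
    1/20, so a vertex has at most one such corner, and next to it the other
    corners are forced to be small (triangles, or quadrilaterals). Let e, e' be
    edges of kappa (length <= 6) whose other sides lie on big faces; by symmetry
    their distance j along kappa is at most 3. For j = 1 a vertex gets two big
    corners. For j = 2 on a pentagon or hexagon both ends of the middle edge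
    carry the same triangle, which then has two consecutive edges on big faces.
    For j = 2 on a quadrilateral the configuration propagates along both big
    faces: every vertex lies on one of them, all other faces are quadrilaterals,
    and Euler's formula shows the graph is a prism. For j = 3 on a hexagon the
    forced small faces bring the two big sides within 4 steps of each other in
    both directions, so the big face would have length <= 8. *)

Section Orbits.
Variables (T : finType) (g : T -> T).

Lemma iter_mod_period x p i : iter p g x = x -> iter i g x = iter (i %% p) g x.
Proof.
move=> Hp; rewrite {1}(divn_eq i p) addnC iterD.
suff -> : iter (i %/ p * p) g x = x by [].
by elim: (i %/ p) => [|q IH] //=; rewrite mulSn iterD IH Hp.
Qed.

Lemma order_le_period x p : 0 < p -> iter p g x = x -> order g x <= p.
Proof.
move=> p_gt0 Hp; rewrite /order.
apply: (@leq_trans (size (traject g x p))); last by rewrite size_traject.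
apply: leq_trans (card_size _).
apply: subset_leq_card; apply/subsetP => y; rewrite inE => /connectP [q Hq ->].
apply/trajectP; exists (size q %% p); first by rewrite ltn_mod.
rewrite -(iter_mod_period _ Hp).
by case/fpathP: Hq => m ->; rewrite last_traject size_traject.
Qed.

Lemma sum_fconnect_orbit (R : nmodType) v (F : T -> R) :
  (\sum_(d | fconnect g v d) F d = \sum_(i < order g v) F (iter i g v))%R.
Proof.
rewrite (eq_bigl (mem (orbit g v))); last by move=> d; rewrite /= fconnect_orbit.
rewrite -big_uniq ?orbit_uniq //= /orbit.
move: (order g v) => k; elim: k v => [|k IH] v; first by rewrite big_nil big_ord0.
rewrite trajectS big_cons big_ord_recl IH /=; congr (_ + _)%R.
by apply: eq_bigr => i _; rewrite -iterSr.
Qed.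

Hypothesis g_inj : injective g.

Lemma order_fconnect x y : fconnect g x y -> order g x = order g y.
Proof.
move=> Hxy; rewrite /order; apply: eq_card => z.
by rewrite !inE (same_connect (fconnect_sym g_inj) Hxy).
Qed.

End Orbits.

Section PCCMap.
Variables (T : finType) (a n : T -> T).
Hypothesis n_inj : injective n.
Hypothesis aK : cancel a a.
Hypothesis a_fixfree : forall d, a d != d.
Hypothesis no_loop : forall d, ~~ fconnect n d (a d).
Hypothesis no_multi_edge :
  forall d d', fconnect n d d' -> fconnect n (a d) (a d') -> d = d'.
Hypothesis curvature_gt0 : forall v, (0 < curvature a n v)%R.
Hypothesis deg_ge3 : forall v, 3 <= deg n v.

Local Notation f := (fperm a n).
Local Notation flen := (flen a n).
Local Notation deg := (deg n).
Local Notation big x := (20 <= flen x).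

Definition invlen (x : T) : rat := ((flen x)%:R)^-1.

Lemma a_inj : injective a. Proof. exact: can_inj aK. Qed.

Lemma fperm_inj : injective f.
Proof. by move=> x y; rewrite /fperm => /n_inj /a_inj. Qed.

Lemma fpermE x : f x = n (a x). Proof. by []. Qed.

Lemma fperm_a x : f (a x) = n x.
Proof. by rewrite fpermE aK. Qed.

Lemma flen_fconnect x y : fconnect f x y -> flen x = flen y.
Proof. exact: (order_fconnect fperm_inj). Qed.

Lemma flen_fperm x : flen (f x) = flen x.
Proof. by symmetry; apply: flen_fconnect; apply: fconnect1. Qed.

Lemma flen_a x : flen (a x) = flen (n x).
Proof. by rewrite -flen_fperm fperm_a. Qed.

Lemma iter_flen x : iter (flen x) f x = x.
Proof. exact: (iter_order fperm_inj). Qed.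

Lemma flen3_cycle x : flen x = 3 -> f (f (f x)) = x.
Proof. by move=> H; have := iter_flen x; rewrite H. Qed.

Lemma flen4_cycle x : flen x = 4 -> f (f (f (f x))) = x.
Proof. by move=> H; have := iter_flen x; rewrite H. Qed.

Lemma deg_fconnect x y : fconnect n x y -> deg x = deg y.
Proof. exact: (order_fconnect n_inj). Qed.

Lemma deg3_cycle y : deg y = 3 -> n (n (n y)) = y.
Proof. by move=> H; rewrite -[RHS](iter_order n_inj y) -/(deg y) H. Qed.

Lemma deg4_cycle y : deg y = 4 -> n (n (n (n y))) = y.
Proof. by move=> H; rewrite -[RHS](iter_order n_inj y) -/(deg y) H. Qed.

Lemma n_neq x : n x != x.
Proof.
apply/eqP => H; have := deg_ge3 x; have := @order_le_period _ n x 1 isT H.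
by rewrite /Defs.deg; lia.
Qed.

(* faces of length 1 would be loops, faces of length 2 double edges *)
Lemma flen_ge3 x : 3 <= flen x.
Proof.
have := iter_flen x; have := order_gt0 f x; rewrite -/(flen x).
case: (flen x) => [|[|[|k]]] // _ /=; rewrite !fpermE => Hx.
- have : fconnect n (a x) (n (a x)) by apply: fconnect1.
  by rewrite Hx (fconnect_sym n_inj) (negbTE (no_loop x)).
- set y := n (a x) in Hx.
  have Hxy : x = a y.
    apply: no_multi_edge; last by rewrite aK; apply: fconnect1.
    by rewrite (fconnect_sym n_inj) -{1}Hx /y; apply: fconnect1.
  have : n y = y by rewrite {2}/y Hxy aK.
  by move/eqP; rewrite (negbTE (n_neq y)).
Qed.

Lemma flen_gt0 x : 0 < flen x.
Proof. exact: leq_trans (flen_ge3 x). Qed.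

Lemma invlen_gt0 x : (0 < invlen x)%R.
Proof. by rewrite /invlen invr_gt0 ltr0n flen_gt0. Qed.

Lemma invlenE L x : flen x = L -> invlen x = (L%:R^-1)%R.
Proof. by rewrite /invlen => ->. Qed.

Lemma invlen_le q x : 0 < q -> q <= flen x -> (invlen x <= q%:R^-1)%R.
Proof.
move=> q_gt0 H; rewrite /invlen lef_pV2 ?ler_nat // posrE ltr0n //.
exact: leq_trans H.
Qed.

Lemma flen_lt_invlen q x : 0 < q -> (q%:R^-1 < invlen x)%R -> flen x < q.
Proof.
by move=> q_gt0; rewrite /invlen ltf_pV2 ?ltr_nat // posrE ltr0n ?flen_gt0.
Qed.

Lemma invlen_le3 x : (invlen x <= 3%:R^-1)%R.
Proof. exact: invlen_le (flen_ge3 x). Qed.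

Lemma invlen_big x : big x -> (invlen x <= 20%:R^-1)%R.
Proof. exact: invlen_le. Qed.

Lemma flen3_invlen x : (4%:R^-1 < invlen x)%R -> flen x = 3.
Proof. by move/(@flen_lt_invlen 4 x isT) => H; have := flen_ge3 x; lia. Qed.

Lemma vertex_weight_gt v :
  (0 < 1 - (deg v)%:R / 2 + \sum_(i < deg v) invlen (iter i n v))%R.
Proof. by have := curvature_gt0 v; rewrite /curvature (sum_fconnect_orbit n). Qed.

Lemma deg3_weight y : deg y = 3 ->
  (2%:R^-1 < invlen y + invlen (n y) + invlen (n (n y)))%R.
Proof.
by move=> H; have := vertex_weight_gt y; rewrite H !big_ord_recl big_ord0 /= /bump /=; lra.
Qed.

Lemma deg4_weight y : deg y = 4 ->
  (1 < invlen y + invlen (n y) + invlen (n (n y)) + invlen (n (n (n y))))%R.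
Proof.
by move=> H; have := vertex_weight_gt y; rewrite H !big_ord_recl big_ord0 /= /bump /=; lra.
Qed.

(* every corner beyond the fifth contributes at most 1/3 - 1/2 < 0 *)
Lemma deg5_weight y : 5 <= deg y ->
  (3%:R / 2%:R < invlen y + invlen (n y) + invlen (n (n y)) + invlen (n (n (n y)))
     + invlen (n (n (n (n y)))))%R.
Proof.
move=> H; have := vertex_weight_gt y; rewrite -(subnKC H) big_split_ord.
set r := deg y - 5.
have : (\sum_(i < r) invlen (iter (5 + i) n y) <= r%:R / 3%:R)%R.
  have -> : (r%:R / 3%:R = \sum_(i < r) (3%:R^-1 : rat))%R.
    by rewrite sumr_const card_ord -[RHS]mulr_natl.
  by apply: ler_sum => i _; apply: invlen_le3.
have : (0 <= r%:R :> rat)%R by apply: ler0n.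
rewrite !big_ord_recl big_ord0 /= /bump /= natrD; lra.
Qed.

Lemma deg_cases y : [\/ deg y = 3, deg y = 4 | 5 <= deg y].
Proof.
by have := deg_ge3 y; case: (deg y) => [|[|[|[|[|k]]]]] //= _; constructor.
Qed.

Ltac invlen_bounds x :=
  have ? := invlen_le3 x; have ? := invlen_gt0 x.

Ltac invlen_bounds5 y :=
  invlen_bounds y; invlen_bounds (n y); invlen_bounds (n (n y));
  invlen_bounds (n (n (n y))); invlen_bounds (n (n (n (n y)))).

Lemma two_big_corners_contra y : big y -> big (n (n y)) -> False.
Proof.
move=> /invlen_big h0 /invlen_big h2; invlen_bounds5 y.
by case: (deg_cases y) => [/deg3_weight | /deg4_weight | /deg5_weight]; lra.
Qed.

(* the three corners weigh more than 1/2, the big one at most 1/20 *)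
Lemma big_corner_deg3 y : big y -> 4 <= flen (n y) ->
  deg y = 3 /\ (9 / 20 - invlen (n y) < invlen (n (n y)))%R.
Proof.
move=> /invlen_big h0 /(invlen_le (isT : 0 < 4)) h1; invlen_bounds5 y.
have d3 : deg y = 3.
  by case: (deg_cases y) => [// | /deg4_weight | /deg5_weight] ?; exfalso; lra.
by split; [exact: d3 | have := deg3_weight d3; lra].
Qed.

Lemma big_corner_deg3_rev y : big (n (n y)) -> 4 <= flen (n y) ->
  deg y = 3 /\ (9 / 20 - invlen (n y) < invlen y)%R.
Proof.
move=> /invlen_big h2 /(invlen_le (isT : 0 < 4)) h1; invlen_bounds5 y.
have d3 : deg y = 3.
  by case: (deg_cases y) => [// | /deg4_weight | /deg5_weight] ?; exfalso; lra.
by split; [exact: d3 | have := deg3_weight d3; lra].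
Qed.

Lemma big_corner_tri y : big y -> 5 <= flen (n y) ->
  deg y = 3 /\ flen (n (n y)) = 3.
Proof.
move=> Hb H5; have [d3 Hw] := big_corner_deg3 Hb (ltnW H5).
by split; [exact: d3 | apply: flen3_invlen; have := invlen_le (isT : 0 < 5) H5; lra].
Qed.

Lemma big_corner_tri_rev y : big (n (n y)) -> 5 <= flen (n y) ->
  deg y = 3 /\ flen y = 3.
Proof.
move=> Hb H5; have [d3 Hw] := big_corner_deg3_rev Hb (ltnW H5).
by split; [exact: d3 | apply: flen3_invlen; have := invlen_le (isT : 0 < 5) H5; lra].
Qed.

Lemma big_corner_quad y : big y -> flen (n y) = 4 ->
  deg y = 3 /\ flen (n (n y)) <= 4.
Proof.
move=> Hb H4; have [d3 Hw] := big_corner_deg3 Hb (eq_leq (esym H4)).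
split; [exact: d3 | apply: (flen_lt_invlen (isT : 0 < 5))].
by rewrite (invlenE H4) in Hw; lra.
Qed.

Lemma two_big_corners_deg3 y : big y -> big (n (n (n y))) -> deg y = 3.
Proof.
move=> /invlen_big h0 /invlen_big h3; invlen_bounds5 y.
by case: (deg_cases y) => [// | /deg4_weight | /deg5_weight] ?; exfalso; lra.
Qed.

Lemma big_tri_vertex y : big y -> flen (n y) = 3 ->
  deg y = 3 \/ [/\ deg y = 4, flen (n (n y)) = 3 & flen (n (n (n y))) = 3].
Proof.
move=> /invlen_big h0 /invlenE h1; invlen_bounds5 y.
case: (deg_cases y) => [| d4 | /deg5_weight ?]; [by left | right | exfalso; lra].
have := deg4_weight d4 => w4.
by split; [exact: d4 | apply: flen3_invlen; lra | apply: flen3_invlen; lra].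
Qed.

Lemma big_tri_vertex_rev y : big (n (n y)) -> flen (n y) = 3 ->
  deg y = 3 \/ [/\ deg y = 4, flen y = 3 & flen (n (n (n y))) = 3].
Proof.
move=> /invlen_big h2 /invlenE h1; invlen_bounds5 y.
case: (deg_cases y) => [| d4 | /deg5_weight ?]; [by left | right | exfalso; lra].
have := deg4_weight d4 => w4.
by split; [exact: d4 | apply: flen3_invlen; lra | apply: flen3_invlen; lra].
Qed.

Lemma tri_hex_tri_vertex y : flen y = 3 -> flen (n y) = 6 -> flen (n (n y)) = 3 ->
  deg y = 3 \/ deg y = 4 /\ flen (n (n (n y))) < 6.
Proof.
move=> /invlenE h0 /invlenE h1 /invlenE h2; invlen_bounds5 y.
case: (deg_cases y) => [| d4 | /deg5_weight ?]; [by left | right | exfalso; lra].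
have := deg4_weight d4 => w4.
by split; [exact: d4 | apply: (flen_lt_invlen (isT : 0 < 6)); lra].
Qed.

Lemma big_consecutive_edges x : big (a x) -> big (a (f x)) -> False.
Proof. by move=> Hb; rewrite flen_a; apply: two_big_corners_contra Hb. Qed.

Lemma big_edges_dist2 x : 4 < flen x <= 6 -> big (a x) -> big (a (f (f x))) -> False.
Proof.
move=> /andP [x5 _] Hb0 Hb2.
set y1 := a (f x).
have [d0 z3] : deg (a x) = 3 /\ flen (n (n (a x))) = 3.
  by apply: big_corner_tri Hb0 _; change (4 < flen (f x)); rewrite flen_fperm.
have [d1 _] : deg y1 = 3 /\ flen y1 = 3.
  apply: big_corner_tri_rev; first by change (big (n (f (f x)))); rewrite -flen_a.
  by change (4 < flen (f (f x))); rewrite !flen_fperm.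
have fy1 : f y1 = n (n (a x)) by rewrite fperm_a.
have fz : f (f (n (n (a x)))) = y1.
  by apply: fperm_inj; rewrite flen3_cycle // fy1.
have afz : a (f (n (n (a x)))) = n (n y1).
  by apply: n_inj; rewrite -fpermE fz deg3_cycle.
apply: (@big_consecutive_edges (n (n (a x)))); first by rewrite flen_a deg3_cycle.
by rewrite afz; change (big (n (f (f x)))); rewrite -flen_a.
Qed.

(* a quadrilateral across which two big faces face each other, as in a prism *)
Definition rung e := [/\ flen e = 4, big (a e) & big (a (f (f e)))].

Lemma rung_step e : rung e -> [/\ deg (a e) = 3, flen (n (n (a e))) = 4,
  f (a (n (n (a e)))) = a e & a (f (f (n (n (a e))))) = f (a (f (f e)))].
Proof.
case=> e4 Hb0 Hb2.
set y1 := a (f e); set y := a (n (f (f e))); set z := n (n (a e)).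
have [d0 z4] : deg (a e) = 3 /\ flen z <= 4.
  by apply: big_corner_quad Hb0 _; change (flen (f e) = 4); rewrite flen_fperm.
have big_nny1 : big (n (n y1)) by change (big (n (f (f e)))); rewrite -flen_a.
have ny1_4 : 4 <= flen (n y1) by change (4 <= flen (f (f e))); rewrite !flen_fperm e4.
have [d1 _] := big_corner_deg3_rev big_nny1 ny1_4.
have fy1 : f y1 = z by rewrite fperm_a.
have fy : f y = y1 by rewrite fpermE aK; exact: deg3_cycle d1.
have big_az : big (a z) by rewrite flen_a /z deg3_cycle.
have big_ay : big (a y) by rewrite /y aK -flen_a.
have z_ne3 : flen z != 3.
  apply/eqP => z3; apply: (big_consecutive_edges big_az).
  suff -> : f z = y by [].
  by apply: fperm_inj; apply: fperm_inj; rewrite flen3_cycle // -fy1 -fy.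
have {z_ne3}z4 : flen z = 4 by have := flen_ge3 z; lia.
have ffz : f (f z) = y.
  by apply: fperm_inj; apply: fperm_inj; rewrite flen4_cycle // -fy1 -fy.
split => //; first by rewrite fperm_a /z deg3_cycle.
by rewrite ffz /y fperm_a.
Qed.

Lemma rung_next e : rung e -> rung (n (n (a e))).
Proof.
move=> re; have [_ z4 fz ffz] := rung_step re; case: re => _ Hb0 Hb2.
by split; rewrite // -flen_fperm ?fz ?ffz ?flen_fperm.
Qed.

Lemma rung_face c c' : rung (a c) -> fconnect f c' (a (f (f (a c)))) ->
  forall x, fconnect f c x -> rung (a x) /\ fconnect f c' (a (f (f (a x)))).
Proof.
move=> rc Hc' x; rewrite -(same_fconnect_finv fperm_inj) => /connectP [p Hp ->] {x}.
elim: p c rc Hc' Hp => [|y p IH] c rc Hc' //= /andP [/eqP <- Hp].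
have [_ _ fz ffz] := rung_step rc; rewrite aK in fz ffz.
have finvE : finv f c = a (n (n c)) by rewrite -{1}fz (finv_f fperm_inj).
apply: IH Hp; rewrite finvE aK; first by have := rung_next rc; rewrite aK.
by rewrite ffz; apply: connect_trans Hc' (fconnect1 _ _).
Qed.

Lemma rung_vertex x : rung (a x) ->
  [/\ deg x = 3, flen (n x) = 4 & flen (n (n x)) = 4].
Proof.
move=> rx; have [d3 z4 _ _] := rung_step rx; rewrite aK in d3 z4.
by case: rx => x4 _ _; split => //; rewrite -fperm_a flen_fperm.
Qed.

Lemma deg3_fconnect u y : deg u = 3 -> fconnect n u y ->
  [\/ y = u, y = n u | y = n (n u)].
Proof.
move=> d3 uy; have := findex_max uy; have := iter_findex uy.
rewrite -/(deg u) d3; case: (findex n u y) => [|[|[|]]] //= <- _.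
- exact: Or31.
- exact: Or32.
- exact: Or33.
Qed.

Lemma order_a x : order a x = 2.
Proof.
have : order a x <= 2 by apply: order_le_period => //=; rewrite !aK.
have := iter_order a_inj x; have := order_gt0 a x.
case: (order a x) => [|[|[|]]] //= _ ax; by have := a_fixfree x; rewrite ax eqxx.
Qed.

Lemma nedge_mul2 : nedge a * 2 = #|T|.
Proof.
rewrite /nedge (fcard_order_set a_inj) //.
by apply/subsetP => x _; rewrite inE order_a.
Qed.

Section Prism.
Hypothesis conn : map_connected a n.
Variable e0 : T.
Hypothesis rung_e0 : rung e0.

Local Notation c1 := (a e0).
Local Notation c2 := (a (f (f e0))).
Let U := [pred x | fconnect f c1 x || fconnect f c2 x].

Lemma rung_c1_face x : fconnect f c1 x ->
  rung (a x) /\ fconnect f c2 (a (f (f (a x)))).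
Proof. by apply: rung_face; rewrite aK ?connect0. Qed.

Lemma rung_c2_face x : fconnect f c2 x ->
  rung (a x) /\ fconnect f c1 (a (f (f (a x)))).
Proof.
have [e4 Hb0 Hb2] := rung_e0.
by apply: rung_face; rewrite aK ?flen4_cycle ?connect0 //; split; rewrite ?flen_fperm ?flen4_cycle.
Qed.

Lemma rung_U x : x \in U -> rung (a x) /\ a (f (f (a x))) \in U.
Proof.
rewrite !inE => /orP [/rung_c1_face [rx ->] | /rung_c2_face [rx ->]] //.
by rewrite orbT.
Qed.

Lemma U_big x : x \in U -> big x.
Proof.
by have [_ ? ?] := rung_e0; rewrite inE => /orP [] /flen_fconnect <-.
Qed.

Lemma U_fclosed x y : fconnect f x y -> x \in U -> y \in U.
Proof.
by move=> xy; rewrite !inE => /orP [] H; rewrite (connect_trans H xy) ?orbT.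
Qed.

Lemma U_vertex x : x \in U -> [/\ deg x = 3, n x \notin U & n (n x) \notin U].
Proof.
move=> Hx; have [d3 nx4 nnx4] := rung_vertex (proj1 (rung_U Hx)).
by split => //; apply/negP => /U_big; rewrite ?nx4 ?nnx4.
Qed.

Lemma U_meets_step x y : (exists2 u, u \in U & fconnect n u x) ->
  (y == a x) || (y == n x) -> exists2 u, u \in U & fconnect n u y.
Proof.
move=> [u Hu ux] /orP [/eqP -> | /eqP ->]; last first.
  by exists u => //; apply: connect_trans ux (fconnect1 _ _).
have [d3 _ _] := U_vertex Hu; have [ru HuU] := rung_U Hu.
case: (deg3_fconnect d3 ux) => ->.
- exists (f u); first exact: U_fclosed (fconnect1 _ _) Hu.
  by rewrite (fconnect_sym n_inj) fpermE; apply: fconnect1.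
- exists (f (a (f (f (a u))))); first exact: U_fclosed (fconnect1 _ _) HuU.
  rewrite (fconnect_sym n_inj) -fperm_a; apply: connect_trans (fconnect1 _ _) _.
  by rewrite [f (a (f (f _)))]fperm_a; apply: fconnect1.
- exists (a (n (n u))) => //; apply: U_fclosed Hu.
  have [_ _ fz _] := rung_step ru; rewrite aK in fz.
  by rewrite (fconnect_sym fperm_inj) -{2}fz; apply: fconnect1.
Qed.

Lemma U_meets y : exists2 u, u \in U & fconnect n u y.
Proof.
have /connectP [p Hp ->] := conn c1 y.
have : exists2 u, u \in U & fconnect n u c1 by exists c1; rewrite // inE connect0.
elim: p (c1) Hp => [|z p IH] x //= /andP [xz Hp] Hx.
exact: IH Hp (U_meets_step Hx xz).
Qed.

Lemma deg_eq3 y : deg y = 3.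
Proof.
by have [u Hu uy] := U_meets y; rewrite -(deg_fconnect uy); case: (U_vertex Hu).
Qed.

Lemma flen_notU y : y \notin U -> flen y = 4.
Proof.
move=> Hy; have [u Hu uy] := U_meets y.
have [d3 nu4 nnu4] := rung_vertex (proj1 (rung_U Hu)).
by case: (deg3_fconnect d3 uy) => yE; rewrite yE //; move: Hy; rewrite yE Hu.
Qed.

Lemma U_vertex_inj u u' : u \in U -> u' \in U -> fconnect n u u' -> u = u'.
Proof.
move=> Hu Hu' uu'; have [d3 nu nnu] := U_vertex Hu.
by case: (deg3_fconnect d3 uu') => E //; rewrite -E Hu' in nu nnu.
Qed.

Lemma nvert_U : nvert n = #|U|.
Proof.
have n_sym := fconnect_sym n_inj.
have -> : #|U| = #|[set froot n x | x in U]|.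
  rewrite card_in_imset // => u u' Hu Hu' /(fingraph.rootP n_sym) uu'.
  exact: U_vertex_inj.
rewrite /nvert /n_comp_mem; apply: eq_card => x; rewrite !inE andbT.
apply/idP/imsetP => [Hr | [u Hu ->]]; last exact: roots_root n_sym u.
have [u Hu ux] := U_meets x; exists u => //.
by rewrite -(eqP Hr); apply/esym/(fingraph.rootP n_sym).
Qed.

Lemma nvert_mul3 : nvert n * 3 = #|T|.
Proof.
rewrite /nvert (fcard_order_set n_inj) //.
by apply/subsetP => x _; rewrite inE -/(deg x) deg_eq3.
Qed.

Lemma fcard_notU : fcard f [predC U] * 4 = #|[predC U]|.
Proof.
apply: (fcard_order_set fperm_inj).
  by apply/subsetP => x; rewrite !inE => Hx; rewrite -/(flen x) flen_notU.
by apply: predC_closed => x y /eqP <-; rewrite !inE -!(same_fconnect1_r fperm_inj).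
Qed.

Lemma nface_split : nface a n = fcard f U + fcard f [predC U].
Proof. by rewrite /nface -n_compC; apply: eq_n_comp_r. Qed.

Hypothesis genus0_an : genus0 a n.

(* Euler's formula, with 2E = 3V = |T| and the faces off U being quadrilaterals *)
Lemma fcard_U : fcard f U = 2 /\ fcard f [predC U] * 2 = #|U|.
Proof.
have := nedge_mul2; have := nvert_mul3; have := nvert_U; have := fcard_notU.
have := nface_split; have := cardC U; have := genus0_an; rewrite /genus0.
set D := #|T|; set u := #|U|; set cC := #|[predC U]|.
lia.
Qed.

Lemma c1_c2_disjoint x : fconnect f c1 x -> fconnect f c2 x -> False.
Proof.
move=> c1x c2x; suff : fcard f U = 1 by rewrite (proj1 fcard_U).
have c1c2 : fconnect f c1 c2 by apply: connect_trans c1x _; rewrite (fconnect_sym fperm_inj).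
rewrite -(n_comp_connect (fconnect_sym fperm_inj) c1); apply: eq_n_comp_r => y.
by rewrite !inE orb_idr // => /(connect_trans c1c2).
Qed.

Lemma card_U : #|U| = flen c1 + flen c2.
Proof.
rewrite /Defs.flen /order -cardUI (@eq_card0 _ [predI _ & _]).
  by rewrite addn0; apply: eq_card => x; rewrite !inE.
by move=> x; rewrite !inE; apply/negP => /andP [/c1_c2_disjoint H /H].
Qed.

Lemma flen_c1_c2 : flen c1 = flen c2.
Proof.
have phi_inj : injective (fun x => a (f (f (a x)))).
  by move=> x y /a_inj /fperm_inj /fperm_inj /a_inj.
have flen_le d1 d2 : (forall x, fconnect f d1 x -> fconnect f d2 (a (f (f (a x))))) ->
    flen d1 <= flen d2.
  move=> H; rewrite /Defs.flen /order -(card_imset _ phi_inj).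
  apply: subset_leq_card; apply/subsetP => _ /imsetP [x Hx ->].
  by rewrite inE; apply: H; rewrite inE in Hx.
apply/eqP; rewrite eqn_leq; apply/andP; split; apply: flen_le => x.
  by case/rung_c1_face.
by case/rung_c2_face.
Qed.

Lemma ncorners_c1_c2 v : ncorners a n v c1 + ncorners a n v c2 = 1.
Proof.
have [u Hu uv] := U_meets v.
rewrite /ncorners; have := cardUI [pred d | fconnect n v d & fconnect f c1 d]
  [pred d | fconnect n v d & fconnect f c2 d].
rewrite (@eq_card0 _ [predI _ & _]); last first.
  by move=> x; rewrite !inE; apply/negP => /andP [/andP [_ /c1_c2_disjoint H] /andP [_ /H]].
rewrite (@eq_card1 _ u [predU _ & _]) ?addn0 // => x; rewrite !inE.
apply/idP/eqP => [Hx | ->].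
  apply/esym/U_vertex_inj => //; first by case/orP: Hx => /andP [_ H]; rewrite inE H ?orbT.
  by apply: connect_trans uv _; case/orP: Hx => /andP [].
by rewrite (fconnect_sym n_inj) uv -[_ || _]/(u \in U) Hu.
Qed.

Lemma rung_prism : is_prism a n (flen c1).
Proof.
have [e4 Hb0 Hb2] := rung_e0; have [fU fC] := fcard_U.
split.
- exact: leq_trans Hb0.
- by rewrite nvert_U card_U flen_c1_c2; lia.
- by rewrite nface_split fU; move: fC; rewrite card_U flen_c1_c2; lia.
exists c1, c2; split => //.
- by apply/negP => /c1_c2_disjoint; apply; apply: connect0.
- by rewrite flen_c1_c2.
- by move=> d H1 H2; apply: flen_notU; rewrite inE; apply/norP.
- by move=> v; split; [exact: deg_eq3 | exact: ncorners_c1_c2].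
Qed.

End Prism.

Lemma rung_contra e : map_connected a n -> genus0 a n ->
  (forall N, ~ is_prism a n N) -> rung e -> False.
Proof. by move=> conn g0 no_prism re; apply: no_prism (rung_prism conn re g0). Qed.

Section Hexagon.
Variable x : T.
Hypothesis x6 : flen x = 6.
Hypothesis big_ax : big (a x).
Hypothesis big_ae3 : big (a (f (f (f x)))).

Local Notation e1 := (f x).
Local Notation e2 := (f (f x)).
Local Notation e3 := (f (f (f x))).
Local Notation z1 := (n (n (a x))).
Local Notation t0 := (a (n (n (a x)))).
(* [a x], [a e1], [a e2] are the three inner vertices of the hexagon side;
   [z1] lies on the triangle forced at [a x], and [t0] across from it on the
   big face of [a x]. *)

Lemma hex_v0 : deg (a x) = 3 /\ flen z1 = 3.
Proof. by apply: big_corner_tri big_ax _; change (5 <= flen e1); rewrite flen_fperm x6. Qed.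

Lemma hex_v2 : n (n e3) = a e2 /\ flen (a e2) = 3.
Proof.
have [d3 y2_3] : deg (a e2) = 3 /\ flen (a e2) = 3.
  apply: big_corner_tri_rev; first by change (big (n e3)); rewrite -flen_a.
  by change (5 <= flen e3); rewrite !flen_fperm x6.
by split => //; exact: deg3_cycle d3.
Qed.

Lemma hex_t0 : f t0 = a x /\ big t0.
Proof.
have [d0 _] := hex_v0; have ft0 : f t0 = a x by rewrite fperm_a deg3_cycle.
by split => //; rewrite -flen_fperm ft0.
Qed.

Lemma hex_v1 : f (f z1) = a e1 /\ (deg (a e1) = 3 \/ deg (a e1) = 4 /\ flen (n (n e2)) < 6).
Proof.
have [_ z3] := hex_v0; have [_ y2_3] := hex_v2.
have fy1 : f (a e1) = z1 by rewrite fperm_a.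
split; first by rewrite -fy1 flen3_cycle // -flen_fperm fy1.
apply: tri_hex_tri_vertex; first by rewrite -flen_fperm fy1.
  by change (flen e2 = 6); rewrite !flen_fperm.
by change (flen (n e2) = 3); rewrite -fperm_a flen_fperm.
Qed.

Lemma hex_ffne2 : f (f (n e2)) = a e2.
Proof. by have [_ y2_3] := hex_v2; rewrite -fperm_a flen3_cycle. Qed.

Lemma hex_deg3 : deg (a e1) = 3 -> iter 3 f (a e3) = a x.
Proof.
move=> d1; have [ne3 _] := hex_v2; have [ft0 big_t0] := hex_t0.
have [ffz _] := hex_v1.
have afz : a (f z1) = n e2.
  by apply: n_inj; rewrite -fpermE ffz; exact: esym (deg3_cycle d1).
have fne2 : f (n e2) = n (f z1) by rewrite fpermE -afz aK.
have anfz : a (n (f z1)) = n e3.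
  by apply: n_inj; rewrite -fpermE -fne2 hex_ffne2 ne3.
have fne3 : f (n e3) = n (n (f z1)) by rewrite fpermE -anfz aK.
have d_t0 : deg t0 = 3.
  apply: two_big_corners_deg3 big_t0 _.
  by change (big (n (n (f z1)))); rewrite -fne3 flen_fperm -flen_a.
rewrite /= fperm_a fne3; change (f (n (n (n t0))) = a x).
by rewrite deg3_cycle.
Qed.

(* Here [a e1] sees a triangle, the hexagon, a triangle and the face of [q];
   the vertices [t0] and [r] each see a big face, a triangle and the face of [q]. *)
Section Degree4.
Local Notation q := (n (n e2)).
Local Notation r := (a (n e2)).
Hypothesis d1 : deg (a e1) = 4.
Hypothesis q6 : flen q < 6.

Lemma hex4_facts : [/\ n (n t0) = f q, f r = q, n (n r) = f (n e3) & flen r = flen q].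
Proof.
have [ne3 _] := hex_v2; have [ffz _] := hex_v1.
have afz : a (f z1) = q.
  by apply: n_inj; rewrite -fpermE ffz; exact: esym (deg4_cycle d1).
have fr : f r = q by rewrite fpermE aK.
have anr : a (n r) = n e3.
  by apply: n_inj; rewrite -fpermE ne3; exact: hex_ffne2.
split => //; first by rewrite fpermE -afz aK.
  by rewrite [f (n e3)]fpermE -anr aK.
by rewrite -fr flen_fperm.
Qed.

Lemma hex4_t0 : deg t0 = 3 \/ [/\ deg t0 = 4, flen q = 3 & flen (n (n (n t0))) = 3].
Proof.
have [nnt0 _ _ _] := hex4_facts; have [_ z3] := hex_v0; have [_ big_t0] := hex_t0.
have nt0 : flen (n t0) = 3 by change (flen (f z1) = 3); rewrite flen_fperm.
by rewrite -flen_fperm -nnt0; apply: big_tri_vertex big_t0 nt0.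
Qed.

Lemma hex4_r : deg r = 3 \/ [/\ deg r = 4, flen q = 3 & flen (n (n (n r))) = 3].
Proof.
have [_ _ nnr rlen] := hex4_facts; have [_ y2_3] := hex_v2.
rewrite -rlen; apply: big_tri_vertex_rev; first by rewrite nnr flen_fperm -flen_a.
by change (flen (f (n e2)) = 3); rewrite flen_fperm -fperm_a flen_fperm.
Qed.

Lemma hex4_deg33 : deg t0 = 3 -> deg r = 3 -> iter 4 f (a e3) = a x.
Proof.
move=> dt dr; have [nnt0 fr nnr rlen] := hex4_facts; have [ft0 big_t0] := hex_t0.
have big_aw : big (a (n (n t0))) by rewrite flen_a deg3_cycle.
have fu : f (a (n (n r))) = r by rewrite fperm_a deg3_cycle.
have big_au : big (a (a (n (n r)))) by rewrite aK nnr flen_fperm -flen_a.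
have fffu : f (f (f (a (n (n r))))) = n (n t0) by rewrite fu fr nnt0.
have := iter_flen (a (n (n r))); rewrite -flen_fperm fu rlen.
have : flen q = 3 \/ flen q = 4 \/ flen q = 5 by have := flen_ge3 q; lia.
case=> [q3 | [q4 | q5]]; rewrite ?q3 ?q4 ?q5 /= fffu => uE; last first.
- by case: (big_edges_dist2 _ big_aw); rewrite ?uE // nnt0 flen_fperm; lia.
- by case: (big_consecutive_edges big_aw); rewrite uE.
rewrite fperm_a -nnr [f (n (n r))]fpermE -uE deg3_cycle //.
Qed.

Lemma hex4_ffq : flen q = 3 -> f (f q) = r.
Proof. by have [_ fr _ rlen] := hex4_facts; move=> q3; rewrite -fr flen3_cycle // rlen. Qed.

Lemma hex4_deg34 : deg t0 = 3 -> deg r = 4 -> flen q = 3 ->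
  flen (n (n (n r))) = 3 -> False.
Proof.
move=> dt dr q3 r3; have [nnt0 _ _ _] := hex4_facts.
have aw : a (n (n t0)) = n (n (n r)).
  by apply: n_inj; rewrite -fpermE nnt0 hex4_ffq // deg4_cycle.
have [_ big_t0] := hex_t0.
have : big (a (n (n t0))) by rewrite flen_a deg3_cycle.
by rewrite aw r3.
Qed.

Lemma hex4_deg43 : flen (n (n (n t0))) = 3 -> flen q = 3 -> deg r = 3 -> False.
Proof.
move=> t3 q3 dr; have [nnt0 _ nnr _] := hex4_facts.
have aw : a (n (n t0)) = n (n r).
  by apply: n_inj; rewrite -fpermE nnt0 hex4_ffq // deg3_cycle.
have : flen (a (n (n t0))) = 3 by rewrite flen_a.
by rewrite aw nnr flen_fperm -flen_a => h; move: big_ae3; rewrite h.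
Qed.

Lemma hex4_deg44 : deg t0 = 4 -> flen (n (n (n t0))) = 3 -> deg r = 4 ->
  flen q = 3 -> False.
Proof.
move=> dt t3 dr q3; have [nnt0 _ nnr _] := hex4_facts; have [_ big_t0] := hex_t0.
have big_b0 : big (a (n (n (n t0)))) by rewrite -flen_fperm fperm_a deg4_cycle.
have aw : a (n (n t0)) = n (n (n r)).
  by apply: n_inj; rewrite -fpermE nnt0 hex4_ffq // deg4_cycle.
have := flen3_cycle (etrans (flen_a _) t3); rewrite fperm_a aw => h.
have anb0 : a (n (a (n (n (n t0))))) = n (n r) by apply: n_inj; rewrite -fpermE.
apply: (two_big_corners_contra big_b0).
by rewrite -fperm_a anb0 nnr !flen_fperm -flen_a.
Qed.

Lemma hex_deg4 : iter 4 f (a e3) = a x.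
Proof.
case: hex4_t0 => [dt | [dt q3 t3]]; case: hex4_r => [dr | [dr q3' r3]].
- exact: hex4_deg33.
- by case: (hex4_deg34 dt dr q3' r3).
- by case: (hex4_deg43 t3 q3 dr).
- by case: (hex4_deg44 dt t3 dr q3).
Qed.

End Degree4.

Lemma big_edges_dist3 : iter 3 f (a e3) = a x \/ iter 4 f (a e3) = a x.
Proof.
have [_ [d3 | [d4 q6]]] := hex_v1; first by left; exact: hex_deg3.
by right; exact: hex_deg4 d4 q6.
Qed.

End Hexagon.

Lemma big_edges_dist3_contra e : flen e = 6 -> big (a e) -> big (a (f (f (f e)))) -> False.
Proof.
have back e' : flen e' = 6 -> big (a e') -> big (a (f (f (f e')))) ->
    exists2 i, 0 < i <= 4 & iter i f (a (f (f (f e')))) = a e'.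
  by move=> e'6 b0 b3; case: (big_edges_dist3 e'6 b0 b3); [exists 3 | exists 4].
move=> e6 b0 b3; have [i1 i1_4 H1] := back e e6 b0 b3.
have e6E : f (f (f (f (f (f e))))) = e by have := iter_flen e; rewrite e6.
have e3_6 : flen (f (f (f e))) = 6 by rewrite !flen_fperm.
have b6 : big (a (f (f (f (f (f (f e))))))) by rewrite e6E.
have [i2 i2_4] := back _ e3_6 b3 b6; rewrite e6E => H2.
have : flen (a e) <= i1 + i2.
  by apply: order_le_period; [lia | rewrite iterD H2 H1].
by move: b0 i1_4 i2_4; lia.
Qed.

Section SmallFace.
Hypothesis conn : map_connected a n.
Hypothesis genus0_an : genus0 a n.
Hypothesis no_prism : forall N, ~ is_prism a n N.

(* by symmetry it suffices to consider edges at distance at most flen e / 2 <= 3 *)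
Lemma small_face_big_edges e j : flen e <= 6 -> 0 < j -> j.*2 <= flen e ->
  big (a e) -> big (a (iter j f e)) -> False.
Proof.
move=> e6 j0 jK b0 bj; have e3 := flen_ge3 e.
have : j = 1 \/ j = 2 \/ j = 3 by lia.
case=> [jE | [jE | jE]]; rewrite jE /= in bj jK.
- exact: big_consecutive_edges b0 bj.
- have [e4 | e5] : flen e = 4 \/ 4 < flen e <= 6 by lia.
    exact: rung_contra conn genus0_an no_prism (And3 e4 b0 bj).
  exact: big_edges_dist2 e5 b0 bj.
- by apply: big_edges_dist3_contra b0 bj; lia.
Qed.

Lemma small_face_big_edges_eq e e' : flen e <= 6 -> big (a e) -> big (a e') ->
  fconnect f e e' -> e' = e.
Proof.
move=> e6 b b' ee'; have jK := findex_max ee'; have ej := iter_findex ee'.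
move: (findex f e e') jK ej => j jK ej; have {}jK : j < flen e := jK.
have [j0 | j0] := posnP j; first by rewrite -ej j0.
exfalso; have [jK2 | jK2] := leqP j.*2 (flen e).
  by apply: (small_face_big_edges e6 j0 jK2 b); rewrite ej.
have e'e : iter (flen e - j) f e' = e by rewrite -ej -iterD subnK ?iter_flen // ltnW.
have fe' : flen e' = flen e by rewrite (flen_fconnect ee').
apply: (@small_face_big_edges e' (flen e - j)); rewrite ?fe' ?e'e //; lia.
Qed.

Lemma edge_small_big_face x k s : big s -> flen k <= 6 ->
  edge_on_face a n x k -> edge_on_face a n x s ->
  exists e, [/\ fconnect a x e, fconnect f k e & fconnect f s (a e)].
Proof.
move=> Hs Hk /orP [xk | xk] /orP [xs | xs].
- by have := flen_fconnect xk; have := flen_fconnect xs; lia.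
- by exists x; split.
- by exists (a x); split; [apply: fconnect1 | | rewrite aK].
- by have := flen_fconnect xk; have := flen_fconnect xs; lia.
Qed.

Lemma small_face_big_neighbours s s' k d d' :
  big s -> big s' -> flen k <= 6 ->
  edge_on_face a n d k -> edge_on_face a n d s ->
  edge_on_face a n d' k -> edge_on_face a n d' s' ->
  fconnect f s s' /\ fconnect a d d'.
Proof.
move=> Hs Hs' Hk dk ds d'k d's'.
have [e [de ke se]] := edge_small_big_face Hs Hk dk ds.
have [e' [d'e' ke' s'e']] := edge_small_big_face Hs' Hk d'k d's'.
have ee' : fconnect f e e'.
  by apply: connect_trans ke'; rewrite (fconnect_sym fperm_inj).
have e6 : flen e <= 6 by rewrite -(flen_fconnect ke).
have ae : big (a e) by rewrite -(flen_fconnect se).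
have ae' : big (a e') by rewrite -(flen_fconnect s'e').
have e'E := small_face_big_edges_eq e6 ae ae' ee'.
split.
- by apply: connect_trans se _; rewrite (fconnect_sym fperm_inj) -e'E.
- by apply: connect_trans de _; rewrite (fconnect_sym a_inj) -e'E.
Qed.

End SmallFace.
End PCCMap.

Theorem lemma2p5 (T : finType) (a n : T -> T) (s s' k d d' : T) :
  planar_PCC a n ->
  (20 <= flen a n s)%N -> (20 <= flen a n s')%N -> (flen a n k <= 6)%N ->
  edge_on_face a n d k -> edge_on_face a n d s ->
  edge_on_face a n d' k -> edge_on_face a n d' s' ->
  fconnect (fperm a n) s s' /\ fconnect a d d'.
Proof.
move=> [[[n_inj aK a_fixfree] conn g0 [no_loop no_multi]] [curv deg3 no_pr]].
apply: (small_face_big_neighbours n_inj aK a_fixfree no_loop no_multi curv deg3 conn g0).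
by move=> N; case: (no_pr N).
Qed.
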